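(* Let $E$ be a real Banach space and let $T:E\to E$ be a linear operator preserving (Birkhoff–James) orthogonality, i.e. for all $x,y\in E$, $x\perp y$ implies $Tx\perp Ty$. Then there exist a constant $k\in\mathbb{R}$ and a linear isometry $U:E\to E$ (i.e. $\|Ux\|=\|x\|$ for all $x\in E$) such that $T=kU$. Equivalently, there is a constant $c\ge 0$ with $\|Tx\|=c\|x\|$ for all $x\in E$.
   Context: For $x,y$ in a real normed space $E$, $x$ is said to be orthogonal to $y$, written $x\perp y$, if $\|x+\alpha y\|\ge\|x\|$ for every $\alpha\in\mathbb{R}$. *)

From HB Require Import structures.
From mathcomp Require Import all_boot all_order all_algebra.
From mathcomp Require Import all_classical all_reals all_analysis.
Set Implicit Arguments. Unset Strict Implicit. Unset Printing Implicit Defensive.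
Import Order.TTheory GRing.Theory Num.Theory.
Local Open Scope ring_scope.

Definition bj_orth (R : realType) (E : normedModType R) (x y : E) : Prop :=
  forall a : R, `|x| <= `|x + a *: y|.

From HB Require Import structures.
From mathcomp Require Import all_boot all_order all_algebra.
From mathcomp Require Import all_classical all_reals all_analysis.
From mathcomp Require Import ring lra.
Set Implicit Arguments. Unset Strict Implicit. Unset Printing Implicit Defensive.
Import Order.TTheory GRing.Theory Num.Theory.
Local Open Scope ring_scope.

(* Along a line t |-> x + t v the norm f t = |x + t v| is convex; if s is a
   subgradient of f at t0, the functional u x + w v |-> u (f t0 - s t0) + s w is
   dominated by the norm on span {x, v} and attains it at x + t0 v, hence
   x + t0 v is orthogonal to f t0 v - s (x + t0 v).  Pushing this orthogonality
   through T gives g t0 (f t0 + s (t - t0)) <= g t f t0 for g t = |T x + t T v|: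
   on each step of a subdivision of [0, 1] the ratio g / f can only drop by a
   second-order amount, so g 0 / f 0 <= g 1 / f 1.  For unit vectors x, y with
   |y - x| < 2 the line stays away from 0, whence |T x| = |T y|; antipodal pairs
   are joined through a midpoint. *)

Section LineNorm.
Variables (R : realType) (E : normedModType R).
Implicit Types (x v : E) (t : R).

Lemma lincomb2D x v (a b c d : R) :
  a *: x + b *: v + (c *: x + d *: v) = (a + c) *: x + (b + d) *: v.
Proof. by rewrite !scalerDl addrACA. Qed.

Lemma line_step_combE x v (t0 c s a : R) :
  (x + t0 *: v) + a *: (c *: v - s *: (x + t0 *: v)) =
  (1 - a * s) *: x + (t0 + a * (c - s * t0)) *: v.
Proof.
rewrite scalerBr !scalerA scalerDr scalerA opprD.
rewrite scalerBl scale1r scalerDl mulrBr scalerBl mulrA.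
by rewrite [LHS](AC (2*(1*2)) ((1*4)*(2*(3*5)))).
Qed.

Definition line_norm x v t : R := `|x + t *: v|.

Lemma line_norm_convex x v t t0 t1 : t < t0 -> t0 < t1 ->
  line_norm x v t0 * (t1 - t) <=
  line_norm x v t * (t1 - t0) + line_norm x v t1 * (t0 - t).
Proof.
move=> lt_t_t0 lt_t0_t1.
have comb : (t1 - t) *: (x + t0 *: v) =
    (t1 - t0) *: (x + t *: v) + (t0 - t) *: (x + t1 *: v).
  by rewrite !scalerDr !scalerA lincomb2D; congr (_ *: _ + _ *: _); ring.
have := ler_normD ((t1 - t0) *: (x + t *: v)) ((t0 - t) *: (x + t1 *: v)).
by rewrite -comb !normrZ !gtr0_norm ?subr_gt0 // /line_norm; lra.
Qed.

(* The left derivative of [line_norm x v] at [t0]; by convexity the left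
   difference quotients are bounded above by any right one. *)
Definition left_slope x v t0 : R :=
  sup [set (line_norm x v t0 - line_norm x v t) / (t0 - t) | t in [set t | t < t0]]%classic.

Lemma line_norm_subgradient x v t0 t :
  line_norm x v t0 + left_slope x v t0 * (t - t0) <= line_norm x v t.
Proof.
pose q t := (line_norm x v t0 - line_norm x v t) / (t0 - t).
have ub_right t1 : t0 < t1 ->
    ubound [set q t | t in [set t | t < t0]]%classic
      ((line_norm x v t1 - line_norm x v t0) / (t1 - t0)).
  move=> lt_t0_t1 _ [t' lt_t'_t0 <-]; rewrite /q.
  have := line_norm_convex x v lt_t'_t0 lt_t0_t1.
  by rewrite ler_pdivrMr ?subr_gt0 // mulrAC ler_pdivlMr ?subr_gt0 //; nra.
have [lt_t_t0|lt_t0_t|->] := ltgtP t t0; last by lra.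
- have : q t <= left_slope x v t0.
    apply: sup_upper_bound; last by exists t.
    split; first by exists (q t), t.
    by exists ((line_norm x v (t0 + 1) - line_norm x v t0) / (t0 + 1 - t0));
      apply: ub_right; lra.
  by rewrite /q ler_pdivrMr ?subr_gt0 //; nra.
- have : left_slope x v t0 <= (line_norm x v t - line_norm x v t0) / (t - t0).
    by apply: ge_sup; [exists (q (t0 - 1)), (t0 - 1) => //=; lra | exact: ub_right].
  by rewrite ler_pdivlMr ?subr_gt0 //; nra.
Qed.

Lemma line_norm_support x v t0 u w :
  u * (line_norm x v t0 - left_slope x v t0 * t0) + left_slope x v t0 * w
    <= `|u *: x + w *: v|.
Proof.
set f := line_norm x v t0; set s := left_slope x v t0.
have support_pos u' w' : 0 < u' -> u' * (f - s * t0) + s * w' <= `|u' *: x + w' *: v|.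
  move=> u'_gt0; have u'_neq0 : u' != 0 by rewrite gt_eqF.
  have -> : u' *: x + w' *: v = u' *: (x + (w' / u') *: v).
    by rewrite scalerDr scalerA mulrC divfK.
  rewrite normrZ gtr0_norm //.
  have := line_norm_subgradient x v t0 (w' / u'); rewrite -/f -/s /line_norm => sub.
  have -> : u' * (f - s * t0) + s * w' = u' * (f + s * (w' / u' - t0)).
    by field.
  by rewrite ler_pM2l.
(* Adding a multiple of [x + t0 *: v], of norm [f], makes the coefficient of [x] positive. *)
pose k := `|u| + 1.
have k_gt0 : 0 < k by rewrite /k; have := normr_ge0 u; lra.
have uk_gt0 : 0 < u + k by rewrite /k; have := ler_norm (- u); rewrite normrN; lra.
have := support_pos _ (w + k * t0) uk_gt0.
have -> : (u + k) *: x + (w + k * t0) *: v = (u *: x + w *: v) + k *: (x + t0 *: v).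
  by rewrite scalerDr scalerA lincomb2D.
have := ler_normD (u *: x + w *: v) (k *: (x + t0 *: v)).
by rewrite normrZ gtr0_norm // -/(line_norm x v t0) -/f; nra.
Qed.

Lemma bj_orth_line_slope x v t0 :
  bj_orth (x + t0 *: v)
    (line_norm x v t0 *: v - left_slope x v t0 *: (x + t0 *: v)).
Proof.
move=> a; rewrite line_step_combE.
apply: le_trans (line_norm_support x v t0 _ _).
by rewrite -/(line_norm x v t0) le_eqVlt; apply/orP; left; apply/eqP; ring.
Qed.

Lemma line_norm_segment_ge x y t : `|x| = 1 -> `|y| = 1 -> 0 <= t <= 1 ->
  1 - `|y - x| / 2 <= line_norm x (y - x) t.
Proof.
move=> nx ny /andP[t_ge0 t_le1]; set v := y - x.
have ex : x = (x + t *: v) + (- t) *: v by rewrite scaleNr addrK.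
have ey : y = (x + t *: v) + (1 - t) *: v.
  by rewrite -addrA -scalerDl addrCA subrr addr0 scale1r /v addrC subrK.
have := ler_normD (x + t *: v) ((- t) *: v).
have := ler_normD (x + t *: v) ((1 - t) *: v).
rewrite -ex -ey !normrZ normrN (ger0_norm t_ge0) (@ger0_norm _ (1 - t)) ?subr_ge0 //.
rewrite nx ny /line_norm.
have := normr_ge0 v; nra.
Qed.

End LineNorm.

Lemma ler_mul1B_nat (R : realType) (a b c : R) :
  (forall n, (0 < n)%N -> a * (1 - c / n%:R) <= b) -> a <= b.
Proof.
move=> approx; rewrite leNgt; apply/negP => lt_b_a.
pose N := (Num.truncn (a * c / (a - b))).+1.
have N_gt0 : 0 < N%:R :> R by rewrite ltr0n.
have := truncnS_gt (a * c / (a - b)); rewrite -/N ltr_pdivrMr ?subr_gt0 // => lt_ac.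
have := approx N isT; rewrite -(ler_pM2r N_gt0).
have -> : a * (1 - c / N%:R) * N%:R = a * N%:R - a * c by field; rewrite gt_eqF.
nra.
Qed.

Lemma le_mul1B_trans (R : realType) (r0 r1 r2 A d : R) :
  0 <= r0 -> 0 <= r2 -> 0 <= A -> 0 <= d ->
  r0 * (1 - A) <= r1 -> r1 * (1 - d) <= r2 -> r0 * (1 - (A + d)) <= r2.
Proof.
move=> r0_ge0 r2_ge0 A_ge0 d_ge0 le01 le12.
have [d_le1|d_gt1] := lerP d 1; last by nra.
have : r0 * (1 - A) * (1 - d) <= r1 * (1 - d) by apply: ler_wpM2r; lra.
have := mulr_ge0 (mulr_ge0 r0_ge0 A_ge0) d_ge0; nra.
Qed.

Section RatioNondecreasing.
Variables (R : realType) (f g sg : R -> R) (m : R).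
Hypothesis m_gt0 : 0 < m.
Hypothesis f_subgradient : forall t0 t, f t0 + sg t0 * (t - t0) <= f t.
Hypothesis g_step : forall t0 t, g t0 * (f t0 + sg t0 * (t - t0)) <= g t * f t0.
Hypothesis f_ge : forall t, 0 <= t <= 1 -> m <= f t.
Hypothesis g_ge0 : forall t, 0 <= g t.

Let ratio t := g t / f t.

Lemma subgradient_nondecreasing : {homo sg : a b / a <= b}.
Proof.
move=> a b; rewrite le_eqVlt => /orP[/eqP -> // | lt_ab].
by have := f_subgradient a b; have := f_subgradient b a; nra.
Qed.

Let f_gt0 t : 0 <= t <= 1 -> 0 < f t.
Proof. by move=> t01; exact: lt_le_trans m_gt0 (f_ge t01). Qed.

Let ratio_ge0 t : 0 <= t <= 1 -> 0 <= ratio t.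
Proof. by move=> t01; rewrite divr_ge0 // ltW // f_gt0. Qed.

Lemma ratio_step a b : 0 <= a -> a <= b -> b <= 1 ->
  ratio a * (1 - (sg b - sg a) * (b - a) / m) <= ratio b.
Proof.
move=> a_ge0 le_ab b_le1.
have a01 : 0 <= a <= 1 by apply/andP; split; lra.
have b01 : 0 <= b <= 1 by apply/andP; split; lra.
have fa_gt0 := f_gt0 a01; have fb_ge := f_ge b01; have ra_ge0 := ratio_ge0 a01.
set D := (sg b - sg a) * (b - a).
set d := f b - (f a + sg a * (b - a)).
have d_ge0 : 0 <= d by rewrite subr_ge0.
have d_le : d <= D by have := f_subgradient b a; rewrite /d /D; lra.
have key : ratio a * (f b - d) <= ratio b * f b.
  have ga : g a = ratio a * f a by rewrite /ratio divfK ?gt_eqF.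
  have gb : g b = ratio b * f b by rewrite /ratio divfK ?gt_eqF ?f_gt0.
  have e : f a + sg a * (b - a) = f b - d by rewrite /d; ring.
  by have := g_step a b; rewrite e ga gb [X in X <= _]mulrAC ler_pM2r.
have qD : D / m * m = D by rewrite divfK // gt_eqF.
rewrite -(ler_pM2r (lt_le_trans m_gt0 fb_ge)); apply: le_trans key.
have fb_m : 0 <= f b - m by rewrite subr_ge0.
have D_d : 0 <= D - d by rewrite subr_ge0.
have := mulr_ge0 (mulr_ge0 ra_ge0 (divr_ge0 (le_trans d_ge0 d_le) (ltW m_gt0))) fb_m.
have := mulr_ge0 ra_ge0 D_d.
nra.
Qed.

Lemma ratio_chain n k : (0 < n)%N -> (k <= n)%N ->
  ratio 0 * (1 - (sg (k%:R / n%:R) - sg 0) / (n%:R * m)) <= ratio (k%:R / n%:R).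
Proof.
move=> n_gt0; have n_gt0' : 0 < n%:R :> R by rewrite ltr0n.
have kn01 j : (j <= n)%N -> 0 <= (j%:R / n%:R : R) <= 1.
  move=> le_jn; apply/andP; split; first exact: divr_ge0.
  by rewrite ler_pdivrMr // mul1r ler_nat.
elim: k => [|k IH] lt_kn; first by rewrite mul0r subrr mul0r subr0 mulr1.
have le_kn := ltnW lt_kn.
have /andP[a_ge0 _] := kn01 _ le_kn; have /andP[_ b_le1] := kn01 _ lt_kn.
set a := k%:R / n%:R in IH a_ge0 *; set b := k.+1%:R / n%:R in b_le1 *.
have ba : b - a = n%:R^-1 by rewrite /a /b -mulrBl -addn1 natrD addrAC subrr add0r mul1r.
have le_ab : a <= b by rewrite -subr_ge0 ba invr_ge0 ltW.
have step := ratio_step a_ge0 le_ab b_le1.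
have -> : (sg b - sg 0) / (n%:R * m) =
    (sg a - sg 0) / (n%:R * m) + (sg b - sg a) * (b - a) / m.
  by rewrite ba; field; rewrite !gt_eqF.
apply: le_mul1B_trans (IH le_kn) step.
- by apply: ratio_ge0; rewrite lexx ler01.
- exact: ratio_ge0 (kn01 _ lt_kn).
- apply: divr_ge0; last by rewrite mulr_ge0 // ltW.
  by rewrite subr_ge0 subgradient_nondecreasing.
- apply: divr_ge0 (ltW m_gt0); rewrite mulr_ge0 // subr_ge0 //.
  exact: subgradient_nondecreasing.
Qed.

Lemma ratio_nondecreasing01 : ratio 0 <= ratio 1.
Proof.
apply: (@ler_mul1B_nat _ _ _ ((sg 1 - sg 0) / m)) => n n_gt0.
have n_neq0 : n%:R != 0 :> R by rewrite pnatr_eq0 -lt0n.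
have -> : (sg 1 - sg 0) / m / n%:R = (sg 1 - sg 0) / (n%:R * m).
  by field; rewrite n_neq0 gt_eqF.
by have := ratio_chain n_gt0 (leqnn n); rewrite divff.
Qed.

End RatioNondecreasing.

Section OrthogonalityPreserving.
Variables (R : realType) (E F : normedModType R) (T : {linear E -> F}).
Hypothesis T_orth : forall x y : E, bj_orth x y -> bj_orth (T x) (T y).

Lemma orth_preserving_line_step (x v : E) t0 t :
  line_norm (T x) (T v) t0 * (line_norm x v t0 + left_slope x v t0 * (t - t0))
    <= line_norm (T x) (T v) t * line_norm x v t0.
Proof.
set f := line_norm x v t0; set s := left_slope x v t0.
set L := f + s * (t - t0).
have f_ge0 : 0 <= f by exact: normr_ge0.
have g_t_ge0 : 0 <= line_norm (T x) (T v) t by exact: normr_ge0.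
have g_t0_ge0 : 0 <= line_norm (T x) (T v) t0 by exact: normr_ge0.
have [L_le0|L_gt0] := lerP L 0; first by nra.
have L_neq0 : L != 0 by rewrite gt_eqF.
have Tp : T (x + t0 *: v) = T x + t0 *: T v by rewrite linearD linearZ.
have Tw : T (f *: v - s *: (x + t0 *: v)) = f *: T v - s *: (T x + t0 *: T v).
  by rewrite linearB !linearZ Tp.
have := T_orth (bj_orth_line_slope x v t0) ((t - t0) / L).
rewrite -/f -/s Tw Tp line_step_combE.
have -> : 1 - (t - t0) / L * s = f / L by rewrite /L in L_neq0 *; field.
have -> : t0 + (t - t0) / L * (f - s * t0) = f / L * t.
  by rewrite /L in L_neq0 *; field.
rewrite -scalerA -scalerDr normrZ (ger0_norm (divr_ge0 f_ge0 (ltW L_gt0))).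
by rewrite -!/(line_norm _ _ _) mulrAC ler_pdivlMr // [_ * f]mulrC.
Qed.

Lemma orth_preserving_norm_le_near (x y : E) :
  `|x| = 1 -> `|y| = 1 -> `|y - x| < 2 -> `|T x| <= `|T y|.
Proof.
move=> nx ny near_xy; set v := y - x.
have Ty : T y = T x + 1 *: T v by rewrite scale1r -linearD /v addrC subrK.
have := @ratio_nondecreasing01 R (line_norm x v) (line_norm (T x) (T v))
  (left_slope x v) (1 - `|v| / 2).
have f0 : line_norm x v 0 = 1 by rewrite /line_norm scale0r addr0.
have f1 : line_norm x v 1 = 1 by rewrite /line_norm scale1r /v addrC subrK.
have g0 : line_norm (T x) (T v) 0 = `|T x| by rewrite /line_norm scale0r addr0.
have g1 : line_norm (T x) (T v) 1 = `|T y| by rewrite /line_norm -Ty.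
rewrite f0 f1 g0 g1 !divr1.
apply; first by lra.
- exact: line_norm_subgradient.
- exact: orth_preserving_line_step.
- by move=> t; apply: line_norm_segment_ge.
- by move=> t; apply: normr_ge0.
Qed.

Lemma orth_preserving_norm_eq_near (x y : E) :
  `|x| = 1 -> `|y| = 1 -> `|y - x| < 2 -> `|T x| = `|T y|.
Proof.
move=> nx ny near_xy; apply/eqP; rewrite eq_le.
by rewrite !orth_preserving_norm_le_near // -normrN opprB.
Qed.

Lemma orth_preserving_norm_eq_sphere (x y : E) :
  `|x| = 1 -> `|y| = 1 -> `|T x| = `|T y|.
Proof.
move=> nx ny; have [near_xy|far_xy] := ltP `|y - x| 2.
  exact: orth_preserving_norm_eq_near.
have [near_xNy|far_xNy] := ltP `|- y - x| 2.
  rewrite -[`|T y|]normrN -linearN.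
  by apply: orth_preserving_norm_eq_near; rewrite ?normrN.
(* Both [y] and [- y] are at distance 2 from [x]: pass through the midpoint. *)
rewrite -opprD normrN addrC in far_xNy.
have nxy : `|x + y| = 2.
  by apply/eqP; rewrite eq_le far_xNy andbT; have := ler_normD x y; lra.
set z := 2^-1 *: (x + y).
have nz : `|z| = 1 by rewrite normrZ nxy ger0_norm ?invr_ge0 // mulVf.
have half_yx : `|2^-1 *: (y - x)| < 2.
  rewrite normrZ ger0_norm ?invr_ge0 //; have := ler_normB y x; rewrite nx ny.
  by rewrite ltr_pdivrMl //; lra.
have two_neq0 : 2 != 0 :> R by rewrite pnatr_eq0.
have zx : z - x = 2^-1 *: (y - x).
  apply: (scalerI two_neq0); rewrite scalerBr /z !scalerA mulfV // !scale1r.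
  by rewrite scaler_nat mulr2n opprD addrACA subrr add0r.
have yz : y - z = 2^-1 *: (y - x).
  apply: (scalerI two_neq0); rewrite scalerBr /z !scalerA mulfV // !scale1r.
  by rewrite scaler_nat mulr2n opprD addrACA subrr addr0.
rewrite (@orth_preserving_norm_eq_near x z) ?zx //.
by apply: orth_preserving_norm_eq_near; rewrite ?yz.
Qed.

Lemma orth_preserving_normM (x y : E) : `|T x| * `|y| = `|T y| * `|x|.
Proof.
have [->|x_neq0] := eqVneq x 0; first by rewrite linear0 !normr0 mul0r mulr0.
have [->|y_neq0] := eqVneq y 0; first by rewrite linear0 !normr0 mul0r mulr0.
have nx : `|x| != 0 by rewrite normr_eq0.
have ny : `|y| != 0 by rewrite normr_eq0.
have normalized (w : E) : `|w| != 0 -> `|(`|w|^-1 *: w)| = 1.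
  by move=> nw; rewrite normrZ ger0_norm ?invr_ge0 // mulVf.
have := orth_preserving_norm_eq_sphere (normalized _ nx) (normalized _ ny).
rewrite !linearZ /= !normrZ !ger0_norm ?invr_ge0 // => e.
by rewrite -[`|T x|](mulVKf nx) e; field.
Qed.

End OrthogonalityPreserving.

Theorem mainTheorem1 (R : realType) (E : completeNormedModType R)
    (T : {linear E -> E}) :
  (forall x y : E, bj_orth x y -> bj_orth (T x) (T y)) ->
  exists (k : R) (U : {linear E -> E}),
    (forall x : E, `|U x| = `|x|) /\ (forall x : E, T x = k *: U x).
Proof.
move=> T_orth.
have [T0|/existsNP[x0 Tx0_neq0]] := pselect (forall x, T x = 0).
  by exists 0, idfun; split => // x; rewrite T0 scale0r.
have x0_neq0 : x0 != 0 by apply: contra_notN Tx0_neq0 => /eqP ->; rewrite linear0.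
pose k := `|T x0| / `|x0|.
have k_neq0 : k != 0 by rewrite mulf_neq0 ?invr_eq0 ?normr_eq0 //; exact/eqP.
have normT x : `|T x| = k * `|x|.
  by rewrite /k mulrAC -orth_preserving_normM // mulfK // normr_eq0.
exists k, (k^-1 \*: T); split => x /=; last by rewrite scalerA mulfV // scale1r.
have k_ge0 : 0 <= k by rewrite divr_ge0.
by rewrite normrZ normT ger0_norm ?invr_ge0 // mulKf.
Qed.
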